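(* Let $A\in\mathbb{R}^{n_x\times n_x}$, $B\in\mathbb{R}^{n_x\times n_u}$, $K\in\mathbb{R}^{n_u\times n_x}$, $F\in\mathbb{R}^{m_w\times n_x}$, $d\in\mathbb{R}^{m_w}$ with $d\ge0$, $\underline{P}\in\mathbb{R}^{\underline{m}\times n_x}$, $\underline{b}\in\mathbb{R}^{\underline m}$ with $\underline b\ge 0$, $\bar P\in\mathbb{R}^{\bar m\times n_x}$, $\bar b\in\mathbb{R}^{\bar m}$ with $\bar b\ge0$. (a) If for every $i\in\{1,\dots,\underline m\}$ there exist $\underline D_{[i]}\in\mathbb{D}_+^{\underline m}$ and $W_{[i]}\in\mathbb{D}_+^{m_w}$ with $$\begin{bmatrix}2\underline b_i-\underline b^\top\underline D_{[i]}\underline b-d^\top W_{[i]}d & \underline P_i & \underline P_i(A+BK)\\ * & F^\top W_{[i]}F & \mathbf 0\\ * & * & \underline P^\top\underline D_{[i]}\underline P\end{bmatrix}\succ0,$$ then $(A+BK)\mathcal{P}(\underline P,\underline b)\oplus\mathcal{P}(F,d)\subseteq\mathcal{P}(\underline P,\underline b)$. (b) If for every $i\in\{1,\dots,\bar m\}$ there exists $\bar D_{[i]}\in\mathbb{D}_+^{\bar m}$ with $$\begin{bmatrix}2\bar b_i-\bar b^\top\bar D_{[i]}\bar b & \bar P_i(A+BK)\\ * & \bar P^\top\bar D_{[i]}\bar P\end{bmatrix}\succ0,$$ then $(A+BK)\mathcal{P}(\bar P,\bar b)\subseteq\mathcal{P}(\bar P,\bar b)$.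
   Context: For $M\in\mathbb{R}^{m\times n}$ and $b\in\mathbb{R}^m$, $\mathcal{P}(M,b):=\{x\in\mathbb{R}^n:-b\le Mx\le b\}$ (componentwise). $M_i$ denotes the $i$-th row of $M$, $b_i$ the $i$-th entry of $b$. $\mathbb{D}_+^m$ is the set of $m\times m$ diagonal matrices with positive diagonal entries. $\succ0$ means symmetric positive definite, and $*$ denotes blocks determined by symmetry. $\oplus$ is Minkowski sum, and $C\mathcal{S}:=\{Cx:x\in\mathcal{S}\}$. *)

From HB Require Import structures.
From mathcomp Require Import all_boot all_order all_algebra.
Set Implicit Arguments. Unset Strict Implicit. Unset Printing Implicit Defensive.
Import Order.TTheory GRing.Theory Num.Theory.
Local Open Scope ring_scope.

Definition polyset (R : realFieldType) (m n : nat) (M : 'M[R]_(m, n)) (b : 'cV[R]_m)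
  : 'cV[R]_n -> Prop :=
  fun x => forall i : 'I_m, - b i 0 <= (M *m x) i 0 <= b i 0.

Definition msum (R : realFieldType) (n : nat) (S T : 'cV[R]_n -> Prop) : 'cV[R]_n -> Prop :=
  fun z => exists x y, S x /\ T y /\ z = x + y.

Definition mimage (R : realFieldType) (n k : nat) (C : 'M[R]_(k, n)) (S : 'cV[R]_n -> Prop)
  : 'cV[R]_k -> Prop :=
  fun z => exists x, S x /\ z = C *m x.

Definition psubset (R : realFieldType) (n : nat) (S T : 'cV[R]_n -> Prop) : Prop :=
  forall z, S z -> T z.

Definition diag_pos (R : realFieldType) (m : nat) (D : 'M[R]_m) : Prop :=
  is_diag_mx D /\ forall i : 'I_m, 0 < D i i.

Definition posdef (R : realFieldType) (n : nat) (M : 'M[R]_n) : Prop :=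
  M^T = M /\ forall x : 'cV[R]_n, x != 0 -> 0 < (x^T *m M *m x) 0 0.

Definition lmi_a (R : realFieldType) (nx mw ml : nat)
  (Acl : 'M[R]_nx) (F : 'M[R]_(mw, nx)) (d : 'cV[R]_mw)
  (P : 'M[R]_(ml, nx)) (b : 'cV[R]_ml) (i : 'I_ml)
  (D : 'M[R]_ml) (W : 'M[R]_mw) : 'M[R]_(1 + (nx + nx)) :=
  let c : R := 2 * b i 0 - (b^T *m D *m b) 0 0 - (d^T *m W *m d) 0 0 in
  let r : 'rV[R]_(nx + nx) := row_mx (row i P) (row i P *m Acl) in
  block_mx (c%:M : 'M[R]_1) r r^T
    (block_mx (F^T *m W *m F) 0 0 (P^T *m D *m P)).

Definition lmi_b (R : realFieldType) (nx mb : nat) (Acl : 'M[R]_nx)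
  (P : 'M[R]_(mb, nx)) (b : 'cV[R]_mb) (i : 'I_mb) (D : 'M[R]_mb)
  : 'M[R]_(1 + nx) :=
  let c : R := 2 * b i 0 - (b^T *m D *m b) 0 0 in
  let r : 'rV[R]_nx := row i P *m Acl in
  block_mx (c%:M : 'M[R]_1) r r^T (P^T *m D *m P).

From HB Require Import structures.
From mathcomp Require Import all_boot all_order all_algebra.
From mathcomp Require Import ring lra.
Set Implicit Arguments. Unset Strict Implicit. Unset Printing Implicit Defensive.
Import Order.TTheory GRing.Theory Num.Theory.
Local Open Scope ring_scope.

(* Evaluating the quadratic form of the LMI matrix at (±1, y), where y stacks
   the disturbance and the state, gives 0 < c ± 2 P_i (A_cl x + w) + y^T Q y.
   For x, w in the polytopes, y^T Q y <= b^T D b + d^T W d because D and W are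
   positive diagonal, and c cancels these terms down to 2 b_i; hence
   |P_i (A_cl x + w)| < b_i. *)

Section QuadraticForms.

Variable R : realFieldType.

Lemma quad_form_block_scalar n (a t : R) (r : 'rV[R]_n) (Q : 'M[R]_n)
    (y : 'cV[R]_n) :
  ((col_mx (t%:M : 'M_1) y)^T *m block_mx (a%:M : 'M_1) r r^T Q
     *m col_mx (t%:M : 'M_1) y) 0 0
  = t * a * t + 2 * t * (r *m y) 0 0 + (y^T *m Q *m y) 0 0.
Proof.
rewrite tr_col_mx mul_row_block mul_row_col tr_scalar_mx !mulmxDl.
rewrite mul_scalar_mx !mul_mx_scalar mul_scalar_mx -trmx_mul -scalemxAl.
by rewrite !mxE !mulr1n; ring.
Qed.

Lemma quad_form_block_diag m n (Q1 : 'M[R]_m) (Q2 : 'M[R]_n)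
    (w : 'cV[R]_m) (x : 'cV[R]_n) :
  ((col_mx w x)^T *m block_mx Q1 0 0 Q2 *m col_mx w x) 0 0
  = (w^T *m Q1 *m w) 0 0 + (x^T *m Q2 *m x) 0 0.
Proof.
by rewrite tr_col_mx mul_row_block mul_row_col !mulmx0 addr0 add0r mxE.
Qed.

Lemma quad_form_mulmx m n (P : 'M[R]_(m, n)) (D : 'M[R]_m) (x : 'cV[R]_n) :
  x^T *m (P^T *m D *m P) *m x = (P *m x)^T *m D *m (P *m x).
Proof. by rewrite trmx_mul !mulmxA. Qed.

Lemma diag_pos_quad_le m (D : 'M[R]_m) (u b : 'cV[R]_m) :
  diag_pos D -> (forall j, - b j 0 <= u j 0 <= b j 0) ->
  (u^T *m D *m u) 0 0 <= (b^T *m D *m b) 0 0.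
Proof.
move=> [/diag_mxP [dd ->] dd_gt0] ub.
have quadE (v : 'cV[R]_m) :
    (v^T *m diag_mx dd *m v) 0 0 = \sum_k dd 0 k * (v k 0 * v k 0).
  by rewrite mul_mx_diag mxE; apply: eq_bigr => k _; rewrite !mxE; ring.
rewrite !quadE; apply: ler_sum => k _.
have := dd_gt0 k; rewrite mxE eqxx mulr1n => /ltW dk_ge0.
have /andP [ubl ubr] := ub k.
by apply: ler_wpM2l => //; nra.
Qed.

Lemma posdef_block_row_bound n (a : R) (r : 'rV[R]_n) (Q : 'M[R]_n)
    (y : 'cV[R]_n) :
  posdef (block_mx (a%:M : 'M_1) r r^T Q) ->
  2 * `|(r *m y) 0 0| < a + (y^T *m Q *m y) 0 0.
Proof.
move=> [_ pdQ].
have pos_at t : t != 0 -> 0 < t * a * t + 2 * t * (r *m y) 0 0 + (y^T *m Q *m y) 0 0.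
  move=> t_neq0; rewrite -quad_form_block_scalar; apply: pdQ.
  rewrite col_mx_eq0 negb_and; apply/orP; left.
  by apply: contra t_neq0 => /eqP/matrixP/(_ 0 0); rewrite !mxE mulr1n => ->.
have := pos_at 1 (oner_neq0 R).
have := pos_at (-1); rewrite oppr_eq0 oner_neq0 => /(_ isT).
case: (lerP 0 ((r *m y) 0 0)) => [/ger0_norm | /ltr0_norm] ->; lra.
Qed.

End QuadraticForms.

Lemma row_mulmxE (R : realFieldType) m n (P : 'M[R]_(m, n)) (z : 'cV[R]_n) i :
  (row i P *m z) 0 0 = (P *m z) i 0.
Proof. by rewrite -row_mul mxE. Qed.

Lemma lmi_a_row_bound (R : realFieldType) nx mw ml (Acl : 'M[R]_nx)
    (F : 'M[R]_(mw, nx)) (d : 'cV[R]_mw) (P : 'M[R]_(ml, nx)) (b : 'cV[R]_ml)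
    (i : 'I_ml) (D : 'M[R]_ml) (W : 'M[R]_mw) (x w : 'cV[R]_nx) :
  diag_pos D -> diag_pos W -> posdef (lmi_a Acl F d P b i D W) ->
  polyset P b x -> polyset F d w ->
  `|(P *m (Acl *m x + w)) i 0| < b i 0.
Proof.
move=> posD posW /(posdef_block_row_bound (col_mx w x)) + Px Fw.
rewrite mul_row_col quad_form_block_diag !quad_form_mulmx -mulmxA.
rewrite -mulmxDr row_mulmxE [w + _]addrC.
have := diag_pos_quad_le posD Px; have := diag_pos_quad_le posW Fw.
lra.
Qed.

Lemma lmi_b_row_bound (R : realFieldType) nx mb (Acl : 'M[R]_nx)
    (P : 'M[R]_(mb, nx)) (b : 'cV[R]_mb) (i : 'I_mb) (D : 'M[R]_mb)
    (x : 'cV[R]_nx) :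
  diag_pos D -> posdef (lmi_b Acl P b i D) -> polyset P b x ->
  `|(P *m (Acl *m x)) i 0| < b i 0.
Proof.
move=> posD /(posdef_block_row_bound x) + Px.
rewrite quad_form_mulmx -mulmxA row_mulmxE.
have := diag_pos_quad_le posD Px.
lra.
Qed.

Lemma polyset_norm_row (R : realFieldType) m n (P : 'M[R]_(m, n))
    (b : 'cV[R]_m) (z : 'cV[R]_n) :
  (forall i, `|(P *m z) i 0| < b i 0) -> polyset P b z.
Proof. by move=> Pz i; rewrite -ler_norml ltW. Qed.

Theorem mainTheorem3 (R : realFieldType) (nx nu mw ml mb : nat)
  (A : 'M[R]_nx) (B : 'M[R]_(nx, nu)) (K : 'M[R]_(nu, nx))
  (F : 'M[R]_(mw, nx)) (d : 'cV[R]_mw)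
  (Pl : 'M[R]_(ml, nx)) (bl : 'cV[R]_ml)
  (Pb : 'M[R]_(mb, nx)) (bb : 'cV[R]_mb) :
  (forall j, 0 <= d j 0) ->
  (forall j, 0 <= bl j 0) ->
  (forall j, 0 <= bb j 0) ->
  ((forall i : 'I_ml, exists (D : 'M[R]_ml) (W : 'M[R]_mw),
       diag_pos D /\ diag_pos W /\ posdef (lmi_a (A + B *m K) F d Pl bl i D W)) ->
    psubset (msum (mimage (A + B *m K) (polyset Pl bl)) (polyset F d)) (polyset Pl bl))
  /\
  ((forall i : 'I_mb, exists D : 'M[R]_mb,
       diag_pos D /\ posdef (lmi_b (A + B *m K) Pb bb i D)) ->
    psubset (mimage (A + B *m K) (polyset Pb bb)) (polyset Pb bb)).
Proof.
move=> _ _ _; split.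
- move=> lmi _ [_ [w [[x [Px ->]] [Fw ->]]]].
  apply: polyset_norm_row => i.
  have [D [W [posD [posW pdM]]]] := lmi i.
  exact: lmi_a_row_bound posD posW pdM Px Fw.
- move=> lmi _ [x [Px ->]].
  apply: polyset_norm_row => i.
  have [D [posD pdM]] := lmi i.
  exact: lmi_b_row_bound posD pdM Px.
Qed.
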